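(* For every $k\ge1$, the square $$\begin{array}{ccc}H^1(C/\mathcal I^kC)&\xrightarrow{\psi^{(k)}}&H^2(\mathcal I^kC/\mathcal I^{k+1}C)\\ \downarrow\pi&&\downarrow\rho\\ E_k^{0,1}&\xrightarrow{\beta^{(k)}}&E_k^{k,2-k}\end{array}$$ commutes, i.e. $\rho\circ\psi^{(k)}=\beta^{(k)}\circ\pi$, where $\pi$ and $\rho$ are surjective.
   Context: Let $\mathcal R$ be a (possibly non-commutative) ring, $\mathcal I\subset\mathcal R$ a two-sided ideal, and $C=[C^1\xrightarrow{d}C^2]$ a complex of left $\mathcal R$-modules concentrated in degrees 1 and 2. The filtration $\{\mathcal I^iC\}_{i\ge0}$ gives a spectral sequence with $Z_k^{i,j}=\ker(\mathcal I^iC^{i+j}\xrightarrow{d}C^{i+j+1}/\mathcal I^{i+k}C^{i+j+1})$, $B_k^{i,j}=\mathcal I^iC^{i+j}\cap d(\mathcal I^{i-k}C^{i+j-1})$ (with $\mathcal I^m=\mathcal R$ for $m\le0$), $E_k^{i,j}=Z_k^{i,j}/(Z_{k-1}^{i+1,j-1}+B_{k-1}^{i,j})$, and differentials $d_k^{i,j}:E_k^{i,j}\to E_k^{i+k,j+1-k}$ induced by $d$; $E_1^{i,j}=H^{i+j}(\mathcal I^iC/\mathcal I^{i+1}C)$. The $k$-th derived Bockstein map is $\beta^{(k)}=d_k^{0,1}$. The $k$-th generalized Bockstein map $\psi^{(k)}$ is the connecting homomorphism $H^1(C/\mathcal I^kC)\to H^2(\mathcal I^kC/\mathcal I^{k+1}C)$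 of $0\to\mathcal I^kC/\mathcal I^{k+1}C\to C/\mathcal I^{k+1}C\to C/\mathcal I^kC\to0$. Here $E_k^{0,1}=\{a\in C^1:da\in\mathcal I^kC^2\}/\{a\in\mathcal IC^1:da\in\mathcal I^kC^2\}$, and $\pi:H^1(C/\mathcal I^kC)\to E_k^{0,1}$ sends the class of $a\bmod\mathcal I^kC^1$ (with $da\in\mathcal I^kC^2$) to the class of $a$; $\rho$ is the natural surjection $E_1^{k,2-k}\to E_k^{k,2-k}$ (note $d_j^{k,2-k}=0$ as $C^3=0$). *)

From HB Require Import structures.
From mathcomp Require Import all_boot all_algebra.
Set Implicit Arguments. Unset Strict Implicit. Unset Printing Implicit Defensive.
Import GRing.Theory.
Local Open Scope ring_scope.

Section Bockstein.
Variable R : pzRingType.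
Variable I : R -> Prop.

Definition two_sided_ideal : Prop :=
  [/\ I 0, (forall x y, I x -> I y -> I (x + y)), (forall x, I x -> I (- x)),
      (forall r x, I x -> I (r * x)) & (forall r x, I x -> I (x * r))].

Fixpoint idealpow (n : nat) : R -> Prop :=
  match n with
  | 0%N => fun _ => True
  | n'.+1 => fun x => exists s : seq (R * R),
      (forall p, p \in s -> I p.1 /\ idealpow n' p.2) /\ x = \sum_(p <- s) p.1 * p.2
  end.

Definition modpow (M : lmodType R) (n : nat) (x : M) : Prop :=
  exists s : seq (R * M),
    (forall p, p \in s -> idealpow n p.1) /\ x = \sum_(p <- s) p.1 *: p.2.

Variables C1 C2 : lmodType R.       (* C = [C^1 --d--> C^2], C^m = 0 otherwise *)
Variable d : {linear C1 -> C2}.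

(* The bidegree (i,j) is
   recorded by i and the total degree i+j (1 or 2); lower indices i-k use
   truncated subtraction, matching the convention I^m = R for m <= 0. *)

Definition Z1 (k i : nat) (a : C1) : Prop := modpow i a /\ modpow (i + k) (d a).
(* total degree 1:  B_k^{i,1-i} = I^i C^1 \cap d(I^(i-k) C^0) = 0 since C^0 = 0 *)
Definition B1 (k i : nat) (a : C1) : Prop := a = 0.
(* total degree 2:  Z_k^{i,2-i} = I^i C^2  (as C^3 = 0) *)
Definition Z2 (k i : nat) (b : C2) : Prop := modpow i b.
Definition B2 (k i : nat) (b : C2) : Prop :=
  modpow i b /\ exists a, modpow (i - k) a /\ b = d a.

(* E_k^{i,1-i} = Z_k^{i,1-i} / (Z_{k-1}^{i+1,-i} + B_{k-1}^{i,1-i}):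
   representatives are elements of Z1 k i, with the following equivalence *)
Definition E1eq (k i : nat) (x y : C1) : Prop :=
  exists u v, Z1 k.-1 i.+1 u /\ B1 k.-1 i v /\ x - y = u + v.
Definition E2eq (k i : nat) (x y : C2) : Prop :=
  exists u v, Z2 k.-1 i.+1 u /\ B2 k.-1 i v /\ x - y = u + v.

(* H^1(C/I^k C): classes of a mod I^k C^1 with d a in I^k C^2 *)
Definition H1rep (k : nat) (a : C1) : Prop := modpow k (d a).
Definition H1eq (k : nat) (a a' : C1) : Prop := modpow k (a - a').
(* H^2(I^k C/I^(k+1) C) = I^k C^2 / (I^(k+1) C^2 + d(I^k C^1)) *)
Definition H2rep (k : nat) (b : C2) : Prop := modpow k b.
Definition H2eq (k : nat) (b b' : C2) : Prop :=
  exists u a, modpow k.+1 u /\ modpow k a /\ b - b' = u + d a.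

(* generalized Bockstein psi^(k): connecting homomorphism of
   0 -> I^kC/I^(k+1)C -> C/I^(k+1)C -> C/I^kC -> 0, as a relation on
   representatives (diagram chase): lift the class of a to a' mod I^(k+1)C^1,
   apply d, and take b in I^k C^2 with d a' = b mod I^(k+1) C^2. *)
Definition psi_rel (k : nat) (a : C1) (b : C2) : Prop :=
  H2rep k b /\ exists a', modpow k (a' - a) /\ modpow k.+1 (d a' - b).

Definition pi_map (a : C1) : C1 := a.
(* rho : E_1^{k,2-k} = H^2(I^kC/I^(k+1)C) -> E_k^{k,2-k}, natural surjection *)
Definition rho_map (b : C2) : C2 := b.
(* beta^(k) = d_k^{0,1} : E_k^{0,1} -> E_k^{k,2-k}, induced by d *)
Definition beta_map (a : C1) : C2 := d a.

End Bockstein.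

(* Both vertical maps are the identity on representatives, hence surjective.
   The connecting map psi^(k) sends [a] to the class of b, where d a' = b
   mod I^(k+1) C^2 for some lift a' = a mod I^k C^1.  Then
   b - d a = (b - d a') + d (a' - a), with b - d a' in I^(k+1) C^2 = Z_(k-1)^(k+1,1-k)
   and d (a' - a) in I^k C^2 \cap d(I^k C^1), which lies in B_(k-1)^(k,2-k); so b
   and d a agree in E_k^(k,2-k). *)
From HB Require Import structures.
From mathcomp Require Import all_boot all_algebra.
Import GRing.Theory.
Local Open Scope ring_scope.

Section IdealPowers.
Variables (R : pzRingType) (I : R -> Prop).

Lemma idealpow_le m n (r : R) : (m <= n)%N -> idealpow I n r -> idealpow I m r.
Proof.
elim: n m r => [|n IHn] [|m] r //= lemn [s [Hs ->]].
exists s; split=> // p /Hs [Ip1 Hp2]; split=> //; exact: IHn Hp2.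
Qed.

Variable M : lmodType R.

Lemma modpow0 n : modpow I n (0 : M).
Proof. by exists [::]; rewrite big_nil. Qed.

Lemma modpowD n (x y : M) : modpow I n x -> modpow I n y -> modpow I n (x + y).
Proof.
move=> [s [Hs ->]] [t [Ht ->]]; exists (s ++ t); rewrite big_cat; split=> // p.
by rewrite mem_cat => /orP [/Hs|/Ht].
Qed.

Lemma modpow_le m n (x : M) : (m <= n)%N -> modpow I n x -> modpow I m x.
Proof.
by move=> lemn [s [Hs ->]]; exists s; split=> // p /Hs; apply: idealpow_le.
Qed.

Lemma modpow_linear (N : lmodType R) (f : {linear M -> N}) n (x : M) :
  modpow I n x -> modpow I n (f x).
Proof.
move=> [s [Hs ->]]; exists [seq (p.1, f p.2) | p <- s]; split.
  by move=> p /mapP [q /Hs Hq ->].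
by rewrite big_map raddf_sum; apply: eq_bigr => p _ /=; rewrite linearZ.
Qed.

Lemma modpowN n (x : M) : modpow I n x -> modpow I n (- x).
Proof.
move=> [s [Hs ->]]; exists [seq (p.1, - p.2) | p <- s]; split.
  by move=> p /mapP [q /Hs Hq ->].
by rewrite big_map -sumrN; apply: eq_bigr => p _; rewrite scalerN.
Qed.

End IdealPowers.

Section BocksteinSquare.
Variables (R : pzRingType) (I : R -> Prop) (C1 C2 : lmodType R).
Variable d : {linear C1 -> C2}.

Lemma psi_rel_d k a : H1rep I d k a -> psi_rel I d k a (d a).
Proof. by move=> Ha; split=> //; exists a; rewrite !subrr; split; apply: modpow0. Qed.

Lemma psi_rel_E2eq k a b : psi_rel I d k a b -> E2eq I d k k b (d a).
Proof.
move=> [_ [a' [Ha' Hda']]].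
have Hb : modpow I k.+1 (b - d a') by rewrite -opprB; apply: modpowN.
have Ha'a : modpow I (k - k.-1) (a' - a) by apply: modpow_le Ha'; apply: leq_subr.
exists (b - d a'), (d (a' - a)); split=> //; split.
  by split; [apply: modpow_linear | exists (a' - a)].
by rewrite linearB addrA subrK.
Qed.

Lemma E1eq_refl k i z : E1eq I d k i z z.
Proof.
exists 0, 0; rewrite subrr addr0; split=> //.
by split; [apply: modpow0 | rewrite linear0; apply: modpow0].
Qed.

Lemma E2eq_refl k i z : E2eq I d k i z z.
Proof.
exists 0, 0; rewrite subrr addr0; split; first exact: modpow0.
split=> //; split; first exact: modpow0.
by exists 0; rewrite linear0; split; first exact: modpow0.
Qed.

End BocksteinSquare.

Theorem propositionA4 (R : pzRingType) (I : R -> Prop) (C1 C2 : lmodType R)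
    (d : {linear C1 -> C2}) :
  two_sided_ideal I ->
  forall k : nat, (1 <= k)%N ->
  [/\ (* psi^(k) is defined on every class of H^1(C/I^kC) *)
      (forall a, H1rep I d k a -> exists b, psi_rel I d k a b),
      (* the square commutes: rho (psi [a]) = beta (pi [a]) in E_k^{k,2-k} *)
      (forall a b, H1rep I d k a -> psi_rel I d k a b ->
         E2eq I d k k (rho_map b) (beta_map d (pi_map a))),
      (* pi is surjective onto E_k^{0,1} *)
      (forall z, Z1 I d k 0 z -> exists a, H1rep I d k a /\ E1eq I d k 0 (pi_map a) z)
    & (* rho is surjective onto E_k^{k,2-k} *)
      (forall z, Z2 I k k z -> exists b, H2rep I k b /\ E2eq I d k k (rho_map b) z)].
Proof.
move=> _ k _; split.
- by move=> a Ha; exists (d a); apply: psi_rel_d.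
- by move=> a b _; apply: psi_rel_E2eq.
- by move=> z [_ Hdz]; exists z; split; last exact: E1eq_refl.
- by move=> z Hz; exists z; split; last exact: E2eq_refl.
Qed.
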